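(* For every integer $n\ge 0$, \[ d_{n,q}(x)=\sum_{l=0}^{n}\Bigg(\sum_{m=l}^{n}(-1)^m\frac{2^{2m-l}}{m!}S_1(m,l)\,d_{n-m,q}\Bigg)x^l. \]
   Context: Let $p$ be a fixed odd prime, $\mathbb{C}_p$ the completion of the algebraic closure of $\mathbb{Q}_p$, with $|p|_p=1/p$. Let $q\in\mathbb{C}_p$ with $|1-q|_p<p^{-1/(p-1)}$, and $\log$ the $p$-adic logarithm. The numbers $d_{n,q}$ are defined by \[ \frac{q-1+\frac{q-1}{\log q}\cdot\frac12\log(1-4t)}{q\sqrt{1-4t}-1}=\sum_{n=0}^{\infty}d_{n,q}t^n, \] and the ($q$-analogue) Catalan–Daehee polynomials $d_{n,q}(x)$ are defined by \[ \frac{q-1+\frac{q-1}{\log q}\cdot\frac12\log(1-4t)}{q\sqrt{1-4t}-1}(1-4t)^{x/2}=\sum_{n=0}^{\infty}d_{n,q}(x)t^n, \] for $t\in\mathbb{C}_p$ with $|t|_p<p^{-1/(p-1)}$, where $(1-4t)^{x/2}=\exp\big(\tfrac{x}{2}\log(1-4t)\big)$. $S_1(m,l)$ are the Stirling numbers of the first kind: $(x)_m=\sum_{l=0}^m S_1(m,l)x^l$, with $(x)_0=1$, $(x)_m=x(x-1)\cdots(x-m+1)$. *)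

(* Formal power series over a field K of characteristic 0,
   represented by their coefficient sequences nat -> K. *)
From HB Require Import structures.
From mathcomp Require Import all_boot all_order all_algebra.
Set Implicit Arguments. Unset Strict Implicit. Unset Printing Implicit Defensive.
Import Order.TTheory GRing.Theory Num.Theory.
Local Open Scope ring_scope.

Section FPS.
Variable K : fieldType.

Definition oneS : nat -> K := fun n => (n == 0%N)%:R.

Definition mulS (f g : nat -> K) : nat -> K :=
  fun n => \sum_(k < n.+1) f k * g (n - k)%N.

Fixpoint powS (f : nat -> K) (j : nat) : nat -> K :=
  match j with 0%N => oneS | j'.+1 => mulS f (powS f j') end.

(* formal exponential exp(f) = sum_j f^j / j!, for f with f 0 = 0 *)
Definition expS (f : nat -> K) : nat -> K :=
  fun n => \sum_(j < n.+1) (j`!%:R)^-1 * powS f j n.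

(* formal log(1 - 4t) = - sum_{k>=1} (4t)^k / k *)
Definition log1m4t : nat -> K :=
  fun n => if n == 0%N then 0 else - ((4 ^ n)%:R / n%:R).

(* (1 - 4t)^a := exp(a log(1 - 4t)) *)
Definition pow1m4t (a : K) : nat -> K := expS (fun n => a * log1m4t n).

(* formal inverse of g with g 0 != 0:  g^{-1} = g0^{-1} sum_j u^j,
   u = 1 - g / g0 *)
Definition invS (g : nat -> K) : nat -> K :=
  fun n => (g 0%N)^-1 *
    \sum_(j < n.+1) powS (fun k => if k == 0%N then 0 else - (g k / g 0%N)) j n.

(* numerator  q - 1 + (q-1)/log q * 1/2 * log(1-4t), with lq standing for log q *)
Definition cdnum (q lq : K) : nat -> K :=
  fun n => (q - 1) * oneS n + (q - 1) / lq * 2^-1 * log1m4t n.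

(* denominator  q * sqrt(1-4t) - 1 *)
Definition cdden (q : K) : nat -> K :=
  fun n => q * pow1m4t (2^-1) n - oneS n.

Definition dq (q lq : K) (n : nat) : K := mulS (cdnum q lq) (invS (cdden q)) n.

Definition dqx (q lq x : K) (n : nat) : K :=
  mulS (mulS (cdnum q lq) (invS (cdden q))) (pow1m4t (x / 2)) n.

End FPS.

(* signed Stirling numbers of the first kind: (x)_m = sum_l S1 m l x^l *)
Definition S1 (m l : nat) : int := (\prod_(i < m) ('X - (i%:R)%:P) : {poly int})`_l.

From HB Require Import structures.
From mathcomp Require Import all_boot all_order all_algebra zify ring.
Set Implicit Arguments. Unset Strict Implicit. Unset Printing Implicit Defensive.
Import Order.TTheory GRing.Theory Num.Theory.
Local Open Scope ring_scope.

(* The series (1 - 4t)^a = exp(a log(1 - 4t)) satisfies (1 - 4t) E' = -4a E,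
   so its coefficients are the binomial ones, (-4)^m (a)_m / m!.  For a = x/2,
   expanding the falling factorial (x/2)_m in Stirling numbers of the first
   kind and taking the Cauchy product with sum_n d_{n,q} t^n gives the
   identity; nothing about q or log q is used. *)

Section FormalSeries.
Variable K : fieldType.
Implicit Types (f g : nat -> K) (a : K).

Definition trunc f N : {poly K} := \poly_(i < N) f i.

Lemma mulSC f g n : mulS f g n = mulS g f n.
Proof.
rewrite /mulS (reindex_inj rev_ord_inj); apply: eq_bigr => i _ /=.
by rewrite subSS subKn 1?mulrC // -ltnS ltn_ord.
Qed.

Lemma powS_trunc f N j n : (n < N)%N -> powS f j n = (trunc f N ^+ j)`_n.
Proof.
elim: j n => [|j IH] n lt_nN /=; first by rewrite expr0 coef1.
rewrite exprS coefM; apply: eq_bigr => i _.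
rewrite IH; last exact: leq_ltn_trans (leq_subr _ _) lt_nN.
by rewrite /trunc coef_poly (leq_ltn_trans (ltnSE (ltn_ord i)) lt_nN).
Qed.

Lemma powS_eq0 f j n : f 0%N = 0 -> (n < j)%N -> powS f j n = 0.
Proof.
move=> f0; elim: j n => [|j IH] n //= lt_nj.
rewrite /mulS big1 // => -[[|i] /= le_in] _; first by rewrite f0 mul0r.
by rewrite IH ?mulr0 //; lia.
Qed.

Definition expP f N M : {poly K} := \sum_(j < M) (j`!%:R)^-1 *: trunc f N ^+ j.

Lemma coef_expP f N M n : f 0%N = 0 -> (n < N)%N -> (n < M)%N ->
  (expP f N M)`_n = expS f n.
Proof.
move=> f0 lt_nN lt_nM; rewrite /expP coef_sum /expS.
rewrite (big_ord_widen _ (fun j => (j`!%:R)^-1 * powS f j n) lt_nM).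
rewrite [RHS]big_mkcond; apply: eq_bigr => j _.
rewrite coefZ -powS_trunc //; case: ltnP => // lt_nj.
by rewrite powS_eq0 ?mulr0.
Qed.

Hypothesis K0 : [pchar K] =i pred0.

Lemma natrS_neq0 n : n.+1%:R != 0 :> K.
Proof. by rewrite (pcharf0P _).1. Qed.

Lemma fact_neq0 n : n`!%:R != 0 :> K.
Proof. by rewrite (pcharf0P _).1 // -lt0n fact_gt0. Qed.

Lemma deriv_expP f N M : (expP f N M.+1)^`() = (trunc f N)^`() * expP f N M.
Proof.
rewrite /expP linear_sum big_ord_recl /= derivZ derivC scaler0 add0r mulr_sumr.
apply: eq_bigr => j _; rewrite derivZ deriv_exp -scalerAr -scaler_nat scalerA.
by rewrite /bump /= add1n factS natrM invfM mulrAC mulVf ?mul1r ?natrS_neq0.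
Qed.

(* The coefficient form of exp(f)' = f' exp(f). *)
Lemma expS_rec f n : f 0%N = 0 ->
  expS f n.+1 *+ n.+1 = \sum_(i < n.+1) (f i.+1 *+ i.+1) * expS f (n - i).
Proof.
move=> f0; have := congr1 (coefp n) (deriv_expP f n.+2 n.+1).
rewrite /= coef_deriv coef_expP // coefM => ->; apply: eq_bigr => i _.
have lt_in := ltn_ord i.
by rewrite coef_deriv /trunc coef_poly ifT ?coef_expP //; lia.
Qed.

Lemma pow1m4t0 a : pow1m4t a 0%N = 1.
Proof. by rewrite /pow1m4t /expS big_ord1 /= fact0 invr1 mul1r. Qed.

Lemma pow1m4t_rec a n :
  pow1m4t a n.+1 *+ n.+1 = - (4 * a) * \sum_(i < n.+1) 4 ^+ i * pow1m4t a (n - i).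
Proof.
rewrite /pow1m4t expS_rec; last by rewrite /log1m4t mulr0.
rewrite mulr_sumr; apply: eq_bigr => i _; rewrite /log1m4t /= natrX -mulr_natr.
by rewrite exprS; field; rewrite -(natrD _ 1 i) natrS_neq0.
Qed.

(* The convolution recurrence at n minus 4 times the one at n - 1. *)
Lemma pow1m4tS a n : pow1m4t a n.+1 *+ n.+1 = 4 * (n%:R - a) * pow1m4t a n.
Proof.
case: n => [|n]; first by rewrite pow1m4t_rec big_ord1 pow1m4t0; ring.
rewrite pow1m4t_rec big_ord_recl /= expr0 mul1r subn0.
have -> : \sum_(i < n.+1) 4 ^+ bump 0 i * pow1m4t a (n.+1 - bump 0 i) =
          4 * \sum_(i < n.+1) 4 ^+ i * pow1m4t a (n - i).
  by rewrite mulr_sumr; apply: eq_bigr => i _; rewrite /bump /= add1n subSS exprS mulrA.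
have rec_n := pow1m4t_rec a n.
rewrite mulrDr mulrCA -rec_n -mulr_natr; ring.
Qed.

Lemma pow1m4t_coef a m :
  pow1m4t a m = (-4) ^+ m / m`!%:R * \prod_(i < m) (a - i%:R).
Proof.
elim: m => [|m IH]; first by rewrite pow1m4t0 big_ord0 fact0 expr0 invr1 !mulr1.
have -> : pow1m4t a m.+1 = 4 * (m%:R - a) * pow1m4t a m / m.+1%:R.
  by rewrite -(pow1m4tS a m) -[_ *+ _]mulr_natr mulfK ?natrS_neq0.
rewrite IH big_ord_recr /= factS natrM exprS; set P := \prod_(_ < _) _.
by field; rewrite -(natrD _ 1) natrS_neq0 fact_neq0.
Qed.

End FormalSeries.

Lemma S1_eq0 m l : (m < l)%N -> S1 m l = 0.
Proof.
by move=> lt_ml; rewrite /S1 nth_default // size_prod_XsubC /index_enum -enumT size_enum_ord.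
Qed.

Lemma falling_factorialE (R : comNzRingType) (y : R) m N : (m < N)%N ->
  \prod_(i < m) (y - i%:R) = \sum_(0 <= l < N) (S1 m l)%:~R * y ^+ l.
Proof.
move=> lt_mN.
pose P : {poly int} := \prod_(i < m) ('X - (i%:R)%:P).
have mapP : map_poly intr P = \prod_(i < m) ('X - (i%:R)%:P) :> {poly R}.
  by rewrite rmorph_prod; apply: eq_bigr => i _; rewrite /= map_polyXsubC /= rmorph_nat.
have := congr1 (horner^~ y) mapP; rewrite /= horner_prod.
under eq_bigr do rewrite hornerXsubC.
move=> <-; rewrite big_mkord (horner_coef_wide _ (n := N)).
  by apply: eq_bigr => l _; rewrite coef_map.
by rewrite mapP size_prod_XsubC /index_enum -enumT size_enum_ord.
Qed.

Lemma sum_lower_triangular (R : nmodType) n (F : nat -> nat -> R) :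
  (forall m l, (m < l)%N -> F m l = 0) ->
  \sum_(0 <= m < n) \sum_(0 <= l < n) F m l =
  \sum_(0 <= l < n) \sum_(l <= m < n) F m l.
Proof.
move=> F0; rewrite exchange_big_nat; apply: eq_big_nat => l _.
rewrite (big_nat_widenl _ _ _ _ _ (leq0n l)) [RHS]big_mkcond.
by apply: eq_big_nat => m _; case: leqP => // /F0.
Qed.

Lemma exprN4_half (K : fieldType) (y : K) m l : 2 != 0 :> K -> (l <= m)%N ->
  (-4) ^+ m * (y / 2) ^+ l = (-1) ^+ m * 2 ^+ (2 * m - l) * y ^+ l.
Proof.
move=> two_neq0 le_lm.
have -> : (-4 : K) ^+ m = (-1) ^+ m * 2 ^+ (2 * m - l) * 2 ^+ l.
  rewrite -mulrA -exprD subnK; last lia.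
  by rewrite exprM -exprMn; congr (_ ^+ _); ring.
by rewrite expr_div_n mulrACA divff ?mulr1 // expf_neq0.
Qed.

Lemma dqx_pow1m4t (K : fieldType) (q lq x : K) n :
  dqx q lq x n = \sum_(0 <= m < n.+1) pow1m4t (x / 2) m * dq q lq (n - m).
Proof. by rewrite big_mkord; apply: mulSC. Qed.

Theorem theorem5 (K : fieldType) (HK : [pchar K] =i pred0)
  (q lq x : K) (hq : q != 1) (hlq : lq != 0) (n : nat) :
  dqx q lq x n =
  \sum_(0 <= l < n.+1)
     (\sum_(l <= m < n.+1)
         (-1) ^+ m * (2 ^+ (2 * m - l)%N / (m`!)%:R) * (S1 m l)%:~R * dq q lq (n - m)%N)
     * x ^+ l.
Proof.
rewrite dqx_pow1m4t.
under eq_big_nat => m /andP[_ lt_mn] do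
  rewrite pow1m4t_coef // (falling_factorialE _ lt_mn) [X in X * _]mulr_sumr mulr_suml.
rewrite sum_lower_triangular => [|m l /S1_eq0 ->]; last by rewrite !(mulr0, mul0r).
apply: eq_big_nat => l _; rewrite mulr_suml; apply: eq_big_nat => m /andP[le_lm _].
transitivity ((-4) ^+ m * (x / 2) ^+ l * ((S1 m l)%:~R / m`!%:R * dq q lq (n - m))).
  by ring.
by rewrite exprN4_half ?(natrS_neq0 HK 1) //; ring.
Qed.
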